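(* For each regular cardinal $\kappa$, a complete bounded distributive lattice $A$ is $\kappa$-proHeyting if and only if it is a $\kappa$-frame; that is, $\mathbf{C}\kappa\mathbf{proH}=\mathbf{C}\kappa\mathbf{Frm}$.
   Context: For a meet-semilattice $A$: $\mathcal{DM} A$ is the complete lattice of normal ideals; an existing join $\bigvee S$ is distributive if $a\wedge\bigvee S=\bigvee\{a\wedge s:s\in S\}$ for all $a$; $\mathcal{BL} A$ is the frame of D-ideals (downsets containing $\bigvee S$ for every subset $S$ of them with distributive join), and $\mathcal{DM} A\subseteq\mathcal{BL} A$. $\mathcal{BL}_\kappa(\mathcal{DM} A)$ is the sub-$\kappa$-frame of $\mathcal{BL} A$ generated by $\mathcal{DM} A$ (closure under finite meets and joins of fewer than $\kappa$ elements in $\mathcal{BL} A$). $A$ is $\kappa$-proHeyting if $\mathcal{BL}_\kappa(\mathcal{DM} A)=\mathcal{DM} A$; $A$ is a $\kappa$-frame if all joins of fewer than $\kappa$ elements exist and are distributive. $\mathbf{C}\kappa\mathbf{proH}$ and $\mathbf{C}\kappa\mathbf{Frm}$ denote the classes of complete bounded distributive lattices that are $\kappa$-proHeyting, respectively $\kappa$-frames. *)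

From HB Require Import structures.
From mathcomp Require Import all_boot all_order.
Set Implicit Arguments. Unset Strict Implicit. Unset Printing Implicit Defensive.
Import Order.TTheory.
Local Open Scope order_scope.

(* ---------- Cardinals: a cardinal kappa is represented by a type K of size kappa ---------- *)
Definition card_le (X Y : Type) : Prop := exists f : X -> Y, injective f.
Definition card_lt (X Y : Type) : Prop := card_le X Y /\ ~ card_le Y X.

Definition regular_cardinal (K : Type) : Prop :=
  card_le nat K /\
  forall (I : Type) (F : I -> Type),
    card_lt I K -> (forall i, card_lt (F i) K) -> card_lt {i : I & F i} K.

Definition fewer_than (K : Type) (T : Type) (S : T -> Prop) : Prop :=
  card_lt {x : T | S x} K.

Section MeetSemilattice.
Context {d : Order.disp_t} {A : meetSemilatticeType d}.

Definition upper_bounds (S : A -> Prop) : A -> Prop :=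
  fun u => forall s, S s -> s <= u.
Definition lower_bounds (S : A -> Prop) : A -> Prop :=
  fun l => forall s, S s -> l <= s.

Definition is_join (S : A -> Prop) (j : A) : Prop :=
  upper_bounds S j /\ forall u, upper_bounds S u -> j <= u.

Definition distributive_join (S : A -> Prop) (j : A) : Prop :=
  is_join S j /\
  forall a : A, is_join (fun y => exists2 s, S s & y = a `&` s) (a `&` j).

Definition downset (I : A -> Prop) : Prop :=
  forall x y, x <= y -> I y -> I x.

(* normal ideals: I = (I^u)^l ; DM A is the family of these *)
Definition normal_ideal (I : A -> Prop) : Prop :=
  forall x, I x <-> lower_bounds (upper_bounds I) x.

Definition D_ideal (I : A -> Prop) : Prop :=
  downset I /\
  forall (S : A -> Prop) (j : A), (forall s, S s -> I s) -> distributive_join S j -> I j.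

(* join in the frame BL A of a family G of D-ideals: the least D-ideal containing all *)
Definition BL_join (G : (A -> Prop) -> Prop) : A -> Prop :=
  fun x => forall J, D_ideal J -> (forall X, G X -> forall y, X y -> J y) -> J x.

Definition kappa_subframe_closed (K : Type) (F : (A -> Prop) -> Prop) : Prop :=
  F (fun _ => True) /\
  (forall X Y, F X -> F Y -> F (fun x => X x /\ Y x)) /\
  (forall G : (A -> Prop) -> Prop,
      (forall X, G X -> F X) -> fewer_than K G -> F (BL_join G)).

Definition BL_kappa_DM (K : Type) : (A -> Prop) -> Prop :=
  fun X => forall F, kappa_subframe_closed K F ->
                     (forall Y, normal_ideal Y -> F Y) -> F X.

Definition kappa_proHeyting (K : Type) : Prop :=
  forall X : A -> Prop, BL_kappa_DM K X <-> normal_ideal X.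

Definition kappa_frame (K : Type) : Prop :=
  forall S : A -> Prop, fewer_than K S -> exists j, distributive_join S j.

Definition complete_lattice : Prop :=
  forall S : A -> Prop, exists j, is_join S j.

End MeetSemilattice.

From HB Require Import structures.
From mathcomp Require Import all_boot all_order.
From Stdlib Require Import ProofIrrelevance ClassicalEpsilon.

Set Implicit Arguments. Unset Strict Implicit. Unset Printing Implicit Defensive.
Import Order.TTheory.
Local Open Scope order_scope.

(* In a complete lattice the normal ideals are exactly the principal downsets.
   If S has fewer than kappa elements, the D-ideal generated by the downsets
   of its elements lies in BL_kappa(DM A); it is principal, say generated by
   b, exactly when b is the distributive join of S.  Hence kappa-proHeyting
   gives distributive joins of small sets, and conversely distributive joins
   of small sets make DM A closed under small BL-joins, so that it contains
   BL_kappa(DM A). *)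

Lemma card_le_lt_trans (X Y K : Type) : card_le X Y -> card_lt Y K -> card_lt X K.
Proof.
move=> [f inj_f] [[g inj_g] not_KY]; split.
  by exists (fun x => g (f x)) => x y /inj_g /inj_f.
by move=> [h inj_h]; apply: not_KY; exists (fun k => f (h k)) => x y /inj_f /inj_h.
Qed.

Lemma fewer_than_functional_image (K X Y : Type) (P : X -> Prop) (Q : Y -> Prop)
    (R : X -> Y -> Prop) :
  (forall x y1 y2, R x y1 -> R x y2 -> y1 = y2) ->
  (forall y, Q y -> exists2 x, P x & R x y) ->
  fewer_than K P -> fewer_than K Q.
Proof.
move=> R_fun Q_img; apply: card_le_lt_trans.
have pre (y : {y | Q y}) : {x | P x /\ R x (sval y)}.
  apply: constructive_indefinite_description.
  by have [x Px Rxy] := Q_img _ (proj2_sig y); exists x.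
exists (fun y => exist P (sval (pre y)) (proj1 (proj2_sig (pre y)))).
move=> [y1 Qy1] [y2 Qy2] [eq_pre]; apply: subset_eq_compat.
have R1 := proj2 (proj2_sig (pre (exist Q y1 Qy1))).
have R2 := proj2 (proj2_sig (pre (exist Q y2 Qy2))).
by rewrite /= eq_pre in R1; exact: R_fun R1 R2.
Qed.

Section DIdeals.
Context {d : Order.disp_t} {A : meetSemilatticeType d}.
Implicit Types (S X Y J : A -> Prop) (G : (A -> Prop) -> Prop).

Definition down (b : A) : A -> Prop := fun x => x <= b.

Definition principal X (b : A) : Prop := forall x, X x <-> x <= b.

(* Every member of [G] lies below some element of [S], and every element of
   [S] lies in some member of [G]: then [G] and [S] generate the same D-ideal. *)
Definition cofinal G S : Prop :=
  (forall X, G X -> exists2 s, S s & forall x, X x -> x <= s) /\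
  (forall s, S s -> exists2 X, G X & X s).

Lemma is_join_unique S (a b : A) : is_join S a -> is_join S b -> a = b.
Proof. by move=> [ub_a le_a] [ub_b le_b]; apply: le_anti; rewrite le_a ?le_b. Qed.

Lemma principal_normal_ideal X (b : A) : principal X b -> normal_ideal X.
Proof.
move=> Xb x; split=> [/Xb le_xb u ub_u | lb_x].
  by apply: le_trans le_xb (ub_u _ _); apply/Xb.
by apply/Xb; apply: lb_x => s /Xb.
Qed.

Lemma normal_ideal_principal X (b : A) : normal_ideal X -> is_join X b -> principal X b.
Proof.
move=> normX [ub_b le_b] x; split=> [|le_xb]; first exact: ub_b.
by apply/normX => u ub_u; apply: le_trans le_xb (le_b u ub_u).
Qed.

Lemma principal_meet X Y (a b : A) :
  principal X a -> principal Y b -> principal (fun x => X x /\ Y x) (a `&` b).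
Proof.
move=> Xa Yb x; rewrite lexI; split=> [[/Xa -> /Yb ->] //|].
by case/andP=> /Xa ? /Yb ?.
Qed.

Lemma D_ideal_meet_le (a u : A) : D_ideal (fun x => a `&` x <= u).
Proof.
split=> [x y le_xy le_ayu | S j Sj [_ distr_j]].
  by apply: le_trans le_ayu; rewrite leI2.
by have [_ le_aj] := distr_j a; apply: le_aj => _ [s Ss ->]; apply: Sj.
Qed.

Lemma D_ideal_down (b : A) : D_ideal (down b).
Proof.
split=> [x y le_xy le_yb | S j Sb [[_ le_j] _]]; first exact: le_trans le_yb.
exact: le_j.
Qed.

Lemma BL_join_ub G X x : G X -> X x -> BL_join G x.
Proof. by move=> GX Xx J _ GJ; exact: GJ GX _ Xx. Qed.

Lemma BL_join_cofinal_le G S J x :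
  cofinal G S -> D_ideal J -> (forall s, S s -> J s) -> BL_join G x -> J x.
Proof.
move=> [G_below _] J_D SJ BLx; apply: (BLx J J_D) => X GX y Xy.
by have [s Ss le_s] := G_below X GX; apply: (proj1 J_D) (le_s y Xy) (SJ s Ss).
Qed.

Lemma BL_join_principalP G S (b : A) :
  cofinal G S -> principal (BL_join G) b <-> distributive_join S b.
Proof.
move=> cofGS; have [_ S_in_G] := cofGS.
have S_BL s : S s -> BL_join G s.
  by move=> Ss; have [X GX Xs] := S_in_G s Ss; exact: BL_join_ub GX Xs.
split=> [Bb | [[ub_b le_b] distr_b]].
  have BLb : BL_join G b by apply/Bb.
  split; first split=> [s /S_BL /Bb // | u ub_u].
    by apply: BL_join_cofinal_le cofGS (D_ideal_down u) ub_u BLb.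
  move=> a; split=> [_ [s /S_BL /Bb le_sb ->] | u ub_u]; first by rewrite leI2.
  apply: BL_join_cofinal_le cofGS (D_ideal_meet_le a u) _ BLb.
  by move=> s Ss; apply: ub_u; exists s.
move=> x; split=> [|le_xb J [down_J closed_J] GJ].
  exact: BL_join_cofinal_le cofGS (D_ideal_down b) ub_b.
apply: down_J le_xb (closed_J S b _ _) => [s Ss|]; last by split.
by have [X GX Xs] := S_in_G s Ss; exact: GJ GX _ Xs.
Qed.

Lemma BL_kappa_DM_BL_join (K : Type) G :
  (forall X, G X -> normal_ideal X) -> fewer_than K G -> BL_kappa_DM K (BL_join G).
Proof.
by move=> normG smallG F [_ [_ F_BL]] F_norm; apply: F_BL => // X GX; exact/F_norm/normG.
Qed.

Lemma normal_ideal_BL_kappa_DM (K : Type) X : normal_ideal X -> BL_kappa_DM K X.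
Proof. by move=> normX F _; apply. Qed.

Section Complete.
Hypothesis complete_A : complete_lattice (A := A).

Lemma normal_ideal_kappa_subframe_closed (K : Type) :
  kappa_frame (A := A) K -> kappa_subframe_closed K (normal_ideal (A := A)).
Proof.
move=> frameA; split; last split.
- have [t [ub_t _]] := complete_A (fun _ => True).
  by apply: (@principal_normal_ideal _ t) => x; split=> // _; apply: ub_t.
- move=> X Y normX normY.
  have [a /(normal_ideal_principal normX) Xa] := complete_A X.
  have [b /(normal_ideal_principal normY) Yb] := complete_A Y.
  exact: principal_normal_ideal (principal_meet Xa Yb).
pose joins G a := exists2 X, G X & is_join X a.
move=> G normG smallG.
have small_joins : fewer_than K (joins G).
  apply: fewer_than_functional_image smallG => [X a b|a [X GX joinX]].
    exact: is_join_unique.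
  by exists X.
have cofG : cofinal G (joins G).
  split=> [X GX | a [X GX joinX]].
    have [a joinX] := complete_A X.
    by exists a; [exists X | case: joinX].
  by exists X => //; apply/(normal_ideal_principal (normG X GX) joinX).
have [j distr_j] := frameA _ small_joins.
exact: principal_normal_ideal (proj2 (BL_join_principalP j cofG) distr_j).
Qed.

Lemma kappa_frame_of_proHeyting (K : Type) :
  kappa_proHeyting (A := A) K -> kappa_frame (A := A) K.
Proof.
move=> proH S smallS.
pose G X := exists2 s, S s & X = down s.
have smallG : fewer_than K G.
  apply: fewer_than_functional_image (fun s X => X = down s) _ _ smallS.
    by move=> s X Y -> ->.
  by move=> X [s Ss ->]; exists s.
have cofG : cofinal G S.
  split=> [X [s Ss ->] | s Ss]; first by exists s.
  by exists (down s); [exists s | exact: lexx].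
have normB : normal_ideal (BL_join G).
  apply/(proH (BL_join G)); apply: BL_kappa_DM_BL_join smallG => X [s _ ->].
  exact: (@principal_normal_ideal _ s).
have [b /(normal_ideal_principal normB) Bb] := complete_A (BL_join G).
by exists b; apply/(BL_join_principalP b cofG).
Qed.

Lemma kappa_proHeyting_of_frame (K : Type) :
  kappa_frame (A := A) K -> kappa_proHeyting (A := A) K.
Proof.
move=> frameA X; split; last exact: normal_ideal_BL_kappa_DM.
by apply; [exact: normal_ideal_kappa_subframe_closed | move=> Y].
Qed.

End Complete.
End DIdeals.

Theorem proposition4p12 (K : Type) (hK : regular_cardinal K)
  (d : Order.disp_t) (A : tbDistrLatticeType d)
  (hA : @complete_lattice d A) :
  @kappa_proHeyting d A K <-> @kappa_frame d A K.
Proof.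
split; [exact: kappa_frame_of_proHeyting | exact: kappa_proHeyting_of_frame].
Qed.
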